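(* Let $1\le k\le d\le n-1$, $h=1$, $\beta=\frac{2M}{k(2d-k+3)}$ (assumed a positive integer), $\alpha=(d+1)\beta$ and $\alpha'=k\beta$. Then, over a sufficiently large finite field, there exist linear codes for $\mathrm{DSS}(n,k,d,1,\alpha,\alpha',\beta,M)$ such that when each of the $d$ surviving complete nodes and the repairing storage node transmits $\beta$ packets to the new node, the reconstruction property (any $k$ complete nodes recover the file) is maintained under failures/repairs.
   Context: $\mathrm{DSS}(n,k,d,h,\alpha,\alpha',\beta,M)$: a file of $M$ packets over $\mathrm{GF}(q)$ is stored on $n$ complete storage nodes of capacity $\alpha$ each (each storing linear combinations of the file packets) so that any $k$ of them reconstruct the file; in addition there are $h$ repairing storage nodes of capacity $\alpha'<\alpha$, which never fail and are never contacted by data collectors. When a complete node fails, a new node is created from $\beta$ packets (linear combinations of stored data) received from each of $d$ surviving complete nodes and from each of the $h$ repairing nodes; repair is functional. *)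

From HB Require Import structures.
From mathcomp Require Import all_boot all_order all_algebra.
Set Implicit Arguments. Unset Strict Implicit. Unset Printing Implicit Defensive.
Import GRing.Theory.
Local Open Scope ring_scope.

(* Every stored packet is a linear combination of
   the file packets, i.e. a row of coefficients in 'rV[F]_M.
   - complete node i stores an (alpha x M) coefficient matrix S i;
   - the (single, h = 1) repairing node stores an (alpha' x M) matrix R. *)

(* A failure/repair event: the failed complete node f and the set H of the d
   surviving complete nodes contacted as helpers. *)
Definition dss_event (n : nat) := ('I_n * {set 'I_n})%type.

Definition valid_event (n d : nat) (e : dss_event n) : Prop :=
  e.1 \notin e.2 /\ #|e.2| = d.

(* Linear repair coefficients chosen for one repair:
   - enc_h j : (beta x alpha)  : helper j sends enc_h j *m S j (beta packets);
   - enc_r   : (beta x alpha') : repairing node sends enc_r *m R (beta packets);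
   - dec_h j, dec_r           : the new node stores a linear combination
     of all received packets. *)
Record repair_coeffs (F : fieldType) (n alpha alpha' beta : nat) := RepairCoeffs {
  enc_h : 'I_n -> 'M[F]_(beta, alpha);
  enc_r : 'M[F]_(beta, alpha');
  dec_h : 'I_n -> 'M[F]_(alpha, beta);
  dec_r : 'M[F]_(alpha, beta)
}.

Definition apply_repair (F : fieldType) (n alpha alpha' beta M : nat)
  (S : 'I_n -> 'M[F]_(alpha, M)) (R : 'M[F]_(alpha', M))
  (e : dss_event n) (c : repair_coeffs F n alpha alpha' beta) :
  'I_n -> 'M[F]_(alpha, M) :=
  fun i => if i == e.1 then
     \sum_(j in e.2) dec_h c j *m (enc_h c j *m S j)
       + dec_r c *m (enc_r c *m R)
   else S i.

Definition repair_strategy (F : fieldType) (n alpha alpha' beta : nat) :=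
  seq (dss_event n) -> dss_event n -> repair_coeffs F n alpha alpha' beta.

(* State of the complete nodes after the events [evs] (in chronological
   order); [past] is the history already processed. *)
Fixpoint run_aux (F : fieldType) (n alpha alpha' beta M : nat)
  (strat : repair_strategy F n alpha alpha' beta) (R : 'M[F]_(alpha', M))
  (past : seq (dss_event n)) (S : 'I_n -> 'M[F]_(alpha, M))
  (evs : seq (dss_event n)) : 'I_n -> 'M[F]_(alpha, M) :=
  match evs with
  | [::] => S
  | e :: evs' =>
      run_aux strat R (rcons past e) (apply_repair S R e (strat past e)) evs'
  end.

Definition run (F : fieldType) (n alpha alpha' beta M : nat)
  (strat : repair_strategy F n alpha alpha' beta) (R : 'M[F]_(alpha', M))
  (S0 : 'I_n -> 'M[F]_(alpha, M)) (evs : seq (dss_event n)) :=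
  run_aux strat R [::] S0 evs.

Definition reconstructible (F : fieldType) (n k alpha M : nat)
  (S : 'I_n -> 'M[F]_(alpha, M)) : Prop :=
  forall K : {set 'I_n}, #|K| = k ->
    exists D : 'I_n -> 'M[F]_(M, alpha),
      \sum_(i in K) D i *m S i = 1%:M.

From HB Require Import structures.
From mathcomp Require Import all_boot all_order all_algebra.
From mathcomp Require Import mxtens zify.
From Stdlib Require Import ClassicalEpsilon.
Set Implicit Arguments. Unset Strict Implicit. Unset Printing Implicit Defensive.
Import GRing.Theory.
Local Open Scope ring_scope.

(* The message is a
   symmetric (d+1) x (d+1) matrix T vanishing on the block of rows and columns
   >= k, whose free entries T_ab (a < k, a <= b) number k(2d-k+3)/2.  Complete
   node i stores psi_i T with psi_i = (1, x_i, ..., x_i^d) for distinct x_i; the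
   repairing node stores T_d0, ..., T_d(k-1), i.e. the whole last row of T.
   To rebuild node f, helper j sends psi_f T psi_j^T = psi_j (T psi_f^T) and the
   repairing node sends psi_f T e_d^T = (T psi_f^T)_d: the d Vandermonde rows psi_j
   together with e_d are independent, so T psi_f^T, hence node f, is recovered
   exactly and the code never changes.  Any k nodes see psi_i T for k distinct
   x_i: each column b >= k of T is a polynomial of degree < k with k roots,
   hence zero; by symmetry so are the rows >= k, and then every column vanishes.
   For general beta, run beta independent copies of the code. *)

Lemma common_kernel0_sum_eq1 (F : fieldType) (I : finType) (P : pred I) m m0 n
    (A : I -> 'M[F]_(m, n)) (A0 : 'M[F]_(m0, n)) :
  (forall v : 'cV[F]_n, (forall i, P i -> A i *m v = 0) -> A0 *m v = 0 -> v = 0) ->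
  exists (D : I -> 'M[F]_(n, m)) (D0 : 'M[F]_(n, m0)),
    \sum_(i | P i) D i *m A i + D0 *m A0 = 1%:M.
Proof.
move=> ker0; set V := (\sum_(i | P i) <<A i>> + A0)%MS.
have annihilated (B : 'M[F]_(_, n)) : (B <= V)%MS -> forall c, B *m col c (cokermx V) = 0.
  by rewrite submxE => /eqP BV c; rewrite colE mulmxA BV mul0mx.
have V_full : (1%:M <= V)%MS.
  rewrite submxE mul1mx; apply/eqP/matrixP => r c.
  rewrite (_ : cokermx V r c = col c (cokermx V) r 0); last by rewrite !mxE.
  rewrite (ker0 (col c (cokermx V))) ?mxE //.
    move=> i Pi; apply: annihilated; apply: submx_trans (addsmxSl _ _).
    by apply: (sumsmx_sup i) => //; rewrite genmxE.
  exact/annihilated/addsmxSr.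
case/sub_addsmxP: V_full => u Hu.
have /sub_sums_genmxP[D HD] : (u.1 *m (\sum_(i | P i) <<A i>>)%MS
                                <= \sum_(i | P i) <<A i>>)%MS by apply: submxMl.
by exists D, u.2; rewrite -HD Hu.
Qed.

Definition powers_row (R : pzRingType) m (x : R) : 'rV[R]_m := \row_(a < m) x ^+ a.

Lemma powers_row_kernel (F : fieldType) (I : finType) N m (x : I -> F)
    (H : {set I}) (v : 'cV[F]_N) :
  injective x -> (m <= #|H|)%N -> (forall a : 'I_N, (m <= a)%N -> v a 0 = 0) ->
  (forall i, i \in H -> powers_row N (x i) *m v = 0) -> v = 0.
Proof.
move=> x_inj mH v_high v_roots; pose p := rVpoly v^T.
have p_eval y : p.[y] = (powers_row N y *m v) 0 0.
  by rewrite horner_poly !mxE; apply: eq_bigr => a _; rewrite valK !mxE mulrC.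
have p0 : p = 0.
  apply: (roots_geq_poly_eq0 (rs := [seq x i | i <- enum H])).
  - apply/allP => y /mapP[i]; rewrite mem_enum => /v_roots vi ->.
    by rewrite /root p_eval vi mxE.
  - by rewrite map_inj_uniq ?enum_uniq.
  rewrite size_map -cardE; apply: leq_trans mH; apply/leq_sizeP => j mj.
  by rewrite coef_rVpoly; case: insubP => // a _ ja; rewrite mxE v_high ?ja.
by apply: trmx_inj; rewrite trmx0 -(rVpolyK v^T) -/p p0 linear0.
Qed.

Definition repairs_exactly (F : fieldType) (n alpha alpha' beta M : nat)
    (S : 'I_n -> 'M[F]_(alpha, M)) (R : 'M[F]_(alpha', M)) (e : dss_event n)
    (c : repair_coeffs F n alpha alpha' beta) : Prop :=
  apply_repair S R e c e.1 = S e.1.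

Definition exact_repairable (F : fieldType) (n alpha alpha' beta M : nat)
    (S : 'I_n -> 'M[F]_(alpha, M)) (R : 'M[F]_(alpha', M)) (e : dss_event n) : Prop :=
  exists c : repair_coeffs F n alpha alpha' beta, repairs_exactly S R e c.

Section ExactRepair.
Variables (F : fieldType) (n d alpha alpha' beta M : nat).
Variables (S : 'I_n -> 'M[F]_(alpha, M)) (R : 'M[F]_(alpha', M)).

Lemma eq_apply_repair S' e (c : repair_coeffs F n alpha alpha' beta) :
  S' =1 S -> apply_repair S' R e c =1 apply_repair S R e c.
Proof.
move=> eqS i; rewrite /apply_repair eqS; congr (if _ then _ + _ else _).
by apply: eq_bigr => j _; rewrite eqS.
Qed.

Lemma run_aux_exact (strat : repair_strategy F n alpha alpha' beta) :
    (forall past e, valid_event d e -> repairs_exactly S R e (strat past e)) ->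
  forall evs past S', S' =1 S -> (forall e, e \in evs -> valid_event d e) ->
    run_aux strat R past S' evs =1 S.
Proof.
move=> strat_exact; elim=> [|e evs IH] past S' eqS valid //=.
apply: IH => [i|e' e'_evs]; last by apply: valid; rewrite inE e'_evs orbT.
have e_valid : valid_event d e by apply: valid; rewrite inE eqxx.
rewrite eq_apply_repair //; case: (eqVneq i e.1) => [->|ne].
  exact: strat_exact past e e_valid.
by rewrite /apply_repair (negbTE ne).
Qed.

Lemma exact_repair_strategy :
    (forall e : dss_event n, valid_event d e -> exact_repairable beta S R e) ->
  exists strat : repair_strategy F n alpha alpha' beta,
    forall evs, (forall e, e \in evs -> valid_event d e) -> run strat R S evs =1 S.
Proof.
move=> repairable.
have inh : inhabited (repair_coeffs F n alpha alpha' beta).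
  by constructor; exact: RepairCoeffs (fun _ => 0) 0 (fun _ => 0) 0.
exists (fun _ e => epsilon inh (repairs_exactly S R e)).
move=> evs valid; apply: run_aux_exact => // past e /repairable[c c_exact].
exact: (epsilon_spec inh (repairs_exactly S R e) (ex_intro _ c c_exact)).
Qed.

End ExactRepair.

Lemma eq_reconstructible (F : fieldType) (n k alpha M : nat) (S S' : 'I_n -> 'M[F]_(alpha, M)) :
  S' =1 S -> reconstructible k S -> reconstructible k S'.
Proof.
move=> eqS recS K cardK; have [D DS] := recS K cardK.
by exists D; rewrite -DS; apply: eq_bigr => i _; rewrite eqS.
Qed.

Section Replication.
Variables (F : fieldType) (beta : nat).

Definition replicate_mx m p (A : 'M[F]_(m, p)) : 'M[F]_(m * beta, p * beta) :=
  A *t 1%:M.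

Lemma replicate_mxD m p (A B : 'M[F]_(m, p)) :
  replicate_mx (A + B) = replicate_mx A + replicate_mx B.
Proof. by apply/matrixP => i j; rewrite !mxE mulrDl. Qed.

Lemma replicate_mx_sum (I : finType) (P : pred I) m p (A : I -> 'M[F]_(m, p)) :
  replicate_mx (\sum_(i | P i) A i) = \sum_(i | P i) replicate_mx (A i).
Proof. by apply: big_morph; [exact: replicate_mxD | exact: tens0mx]. Qed.

Lemma replicate_mxM m p q (A : 'M[F]_(m, p)) (B : 'M[F]_(p, q)) :
  replicate_mx (A *m B) = replicate_mx A *m replicate_mx B.
Proof. by rewrite /replicate_mx tensmx_mul mulmx1. Qed.

Lemma replicate_mx1 m : replicate_mx (1%:M : 'M[F]_m) = 1%:M.
Proof.
apply/matrixP => i j.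
case: (mxtens_indexP i) => i1 i2; case: (mxtens_indexP j) => j1 j2.
rewrite tensmxE !mxE (can_eq (@mxtens_indexK _ _)) xpair_eqE.
by case: (i1 == j1); case: (i2 == j2); rewrite ?mulr1 ?mulr0.
Qed.

Lemma reconstructible_replicate n k alpha M (S : 'I_n -> 'M[F]_(alpha, M)) :
  reconstructible k S -> reconstructible k (fun i => replicate_mx (S i)).
Proof.
move=> recS K cardK; have [D DS] := recS K cardK.
exists (fun i => replicate_mx (D i)).
by rewrite -replicate_mx1 -DS replicate_mx_sum; apply: eq_bigr => i _; rewrite replicate_mxM.
Qed.

Lemma exact_repairable_replicate n alpha alpha' M (S : 'I_n -> 'M[F]_(alpha, M))
    (R : 'M[F]_(alpha', M)) e :
  exact_repairable 1 S R e ->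
  exact_repairable beta (fun i => replicate_mx (S i)) (replicate_mx R) e.
Proof.
case=> c c_exact.
pose enc m (u : 'M[F]_(1, m)) : 'M[F]_(beta, m * beta) :=
  castmx (mul1n beta, erefl) (replicate_mx u).
pose dec m (X : 'M[F]_(m, 1)) : 'M[F]_(m * beta, beta) :=
  castmx (erefl, mul1n beta) (replicate_mx X).
have dec_enc m p (X : 'M[F]_(m, 1)) (u : 'M[F]_(1, p)) (Y : 'M[F]_(p, M)) :
    dec _ X *m (enc _ u *m replicate_mx Y) = replicate_mx (X *m (u *m Y)).
  by rewrite mulmxA mulmx_cast castmx_comp !castmx_id -!replicate_mxM mulmxA.
exists (RepairCoeffs (fun j => enc _ (enc_h c j)) (enc _ (enc_r c))
                     (fun j => dec _ (dec_h c j)) (dec _ (dec_r c))).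
rewrite /repairs_exactly /apply_repair eqxx /= -c_exact /apply_repair eqxx.
rewrite replicate_mxD replicate_mx_sum.
by congr (_ + _); [apply: eq_bigr => j _ |]; rewrite dec_enc.
Qed.

End Replication.

Section ProductMatrixCode.
Variables (F : fieldType) (n k d : nat) (xi : 'I_n -> F).
Hypotheses (xi_inj : injective xi) (k_le_d : (k <= d)%N).

Definition pm_index := [set ab : 'I_k * 'I_d.+1 | (ab.1 <= ab.2)%N].
Definition pm_dim := #|pm_index|.
Definition pm_pos (p : 'I_pm_dim) : 'I_k * 'I_d.+1 := enum_val (p : 'I_#|pm_index|).

(* [pm_entry a b] is the linear form reading the entry T_ab of the message
   matrix T off the message coordinates; [pm_mx x] is the matrix T of x. *)
Definition pm_entry (a b : 'I_d.+1) : 'rV[F]_pm_dim :=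
  \row_p (((pm_pos p).1 == a :> nat) && ((pm_pos p).2 == b :> nat)
       || ((pm_pos p).1 == b :> nat) && ((pm_pos p).2 == a :> nat))%:R.

Definition pm_mx (x : 'cV[F]_pm_dim) : 'M[F]_d.+1 :=
  \matrix_(a, b) (pm_entry a b *m x) 0 0.

Definition pm_node (i : 'I_n) : 'M[F]_(d.+1, pm_dim) :=
  \matrix_(b, p) \sum_(a < d.+1) xi i ^+ a * pm_entry a b 0 p.

Definition pm_repair_node : 'M[F]_(k, pm_dim) :=
  \matrix_(b, p) pm_entry ord_max (widen_ord (leqW k_le_d) b) 0 p.

Lemma pm_entryC a b : pm_entry a b = pm_entry b a.
Proof. by apply/matrixP => r p; rewrite !mxE orbC. Qed.

Lemma pm_entry_high (a b : 'I_d.+1) : (k <= a)%N -> (k <= b)%N -> pm_entry a b = 0.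
Proof.
move=> ka kb; apply/matrixP => r p; rewrite !mxE.
have pos_small (c : 'I_d.+1) : (k <= c)%N -> ((pm_pos p).1 == c :> nat) = false.
  by move=> kc; apply: contraTF (ltn_ord (pm_pos p).1) => /eqP->; rewrite -leqNgt.
by rewrite !pos_small.
Qed.

Lemma pm_entry_pos (p : 'I_pm_dim) :
  pm_entry (widen_ord (leqW k_le_d) (pm_pos p).1) (pm_pos p).2 = delta_mx 0 p.
Proof.
apply/matrixP => r q; rewrite [r]ord1 !mxE /=; congr (nat_of_bool _)%:R.
apply/idP/idP => [|/eqP->]; last by rewrite !eqxx.
have pos_le (s : 'I_pm_dim) : ((pm_pos s).1 <= (pm_pos s).2)%N.
  by have := enum_valP (s : 'I_#|pm_index|); rewrite inE.
move=> same; apply/eqP/(@enum_val_inj _ (mem pm_index)); rewrite -/(pm_pos p) -/(pm_pos q).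
move: (pos_le p) (pos_le q) same.
case: (pm_pos p) => [a1 b1]; case: (pm_pos q) => [a2 b2] /= le1 le2.
by case/orP=> /andP[/eqP e1 /eqP e2]; congr pair; apply: val_inj => /=; lia.
Qed.

Lemma pm_mxC x a b : pm_mx x a b = pm_mx x b a.
Proof. by rewrite !mxE pm_entryC. Qed.

Lemma pm_mx_high x (a b : 'I_d.+1) : (k <= a)%N -> (k <= b)%N -> pm_mx x a b = 0.
Proof. by move=> ka kb; rewrite mxE pm_entry_high // mul0mx mxE. Qed.

Lemma pm_mx_eq0 x : pm_mx x = 0 -> x = 0.
Proof.
move=> T0; apply/matrixP => p c; rewrite [c]ord1.
have /matrixP/(_ (widen_ord (leqW k_le_d) (pm_pos p).1) (pm_pos p).2) := T0.
by rewrite mxE pm_entry_pos -rowE !mxE.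
Qed.

Lemma pm_node_mul i x : pm_node i *m x = (powers_row d.+1 (xi i) *m pm_mx x)^T.
Proof.
apply/matrixP => b c; rewrite [c]ord1 !mxE.
under eq_bigr do rewrite mxE big_distrl /=.
rewrite exchange_big /=; apply: eq_bigr => a _; rewrite !mxE big_distrr /=.
by apply: eq_bigr => p _; rewrite mxE mulrA.
Qed.

Lemma pm_nodeC i j : powers_row d.+1 (xi i) *m pm_node j = powers_row d.+1 (xi j) *m pm_node i.
Proof.
apply/matrixP => r p; rewrite !mxE.
under eq_bigr do rewrite !mxE big_distrr /=.
under [RHS]eq_bigr do rewrite !mxE big_distrr /=.
rewrite exchange_big /=; apply: eq_bigr => a _; apply: eq_bigr => b _.
by rewrite mulrCA pm_entryC.
Qed.

Lemma pm_repair_node_mul i :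
  powers_row k (xi i) *m pm_repair_node = row ord_max (pm_node i).
Proof.
apply/matrixP => r p; rewrite !mxE (bigID (fun a : 'I_d.+1 => (a < k)%N) xpredT) /=.
rewrite [X in _ + X]big1 ?addr0 => [|a]; last first.
  by rewrite -leqNgt => ka; rewrite pm_entry_high ?mxE ?mulr0 //= leqW.
rewrite (big_ord_narrow (leqW k_le_d)); apply: eq_bigr => b _.
by rewrite pm_entryC !mxE.
Qed.

Lemma pm_repairable (e : dss_event n) :
  #|e.2| = d -> exact_repairable 1 pm_node pm_repair_node e.
Proof.
move=> card_H.
have ker0 (v : 'cV[F]_d.+1) :
    (forall j, j \in e.2 -> powers_row d.+1 (xi j) *m v = 0) ->
    (delta_mx 0 ord_max : 'rV[F]_d.+1) *m v = 0 -> v = 0.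
  move=> v_roots v_top; apply: (powers_row_kernel (m := d) xi_inj _ _ v_roots) => [|a da].
    by rewrite card_H.
  have -> : a = ord_max by apply/val_inj/eqP; rewrite /= eqn_leq da -ltnS ltn_ord.
  by have /matrixP/(_ 0 0) := v_top; rewrite -rowE !mxE.
have [Dh [Dr D1]] := common_kernel0_sum_eq1 ker0.
exists (RepairCoeffs (fun _ => powers_row d.+1 (xi e.1)) (powers_row k (xi e.1)) Dh Dr).
rewrite /repairs_exactly /apply_repair eqxx /= -[RHS]mul1mx -D1 mulmxDl mulmx_suml; congr (_ + _).
  by apply: eq_bigr => j _; rewrite pm_nodeC mulmxA.
by rewrite pm_repair_node_mul rowE mulmxA.
Qed.

Lemma pm_reconstructible : reconstructible k pm_node.
Proof.
move=> K card_K.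
have ker0 (x : 'cV[F]_pm_dim) :
    (forall i, i \in K -> pm_node i *m x = 0) -> (0 : 'rV[F]_pm_dim) *m x = 0 -> x = 0.
  move=> x_ker _; apply: pm_mx_eq0.
  have col_eq0 (b : 'I_d.+1) :
      (forall a : 'I_d.+1, (k <= a)%N -> pm_mx x a b = 0) -> col b (pm_mx x) = 0.
    move=> x_b; apply: (powers_row_kernel (m := k) (H := K) xi_inj) => [|a ka|i iK].
    - by rewrite card_K.
    - by rewrite mxE x_b.
    have := x_ker i iK; rewrite pm_node_mul colE mulmxA => /(congr1 trmx).
    by rewrite trmxK trmx0 => ->; rewrite mul0mx.
  have entry_eq0 a b : col b (pm_mx x) = 0 -> pm_mx x a b = 0.
    by move=> /matrixP/(_ a 0); rewrite !mxE.
  have high_col0 (b : 'I_d.+1) : (k <= b)%N -> col b (pm_mx x) = 0.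
    by move=> kb; apply: col_eq0 => a ka; apply: pm_mx_high.
  apply/matrixP => a b; rewrite [RHS]mxE; apply/entry_eq0/col_eq0 => c kc.
  by rewrite pm_mxC; apply/entry_eq0/high_col0.
have [D [D0 D1]] := common_kernel0_sum_eq1 ker0.
by exists D; rewrite -D1 mulmx0 addr0.
Qed.

End ProductMatrixCode.

Lemma sum_leq_ord (a D : nat) : (\sum_(b < D) (a <= b))%N = (D - a)%N.
Proof. by elim: D => [|D IH]; rewrite ?big_ord0 // big_ord_recr /= IH; case: leqP; lia. Qed.

Lemma double_sum_subn (k D : nat) :
  (k <= D)%N -> (2 * \sum_(a < k) (D - a))%N = (k * (2 * D - k + 1))%N.
Proof.
elim: k => [|k IH] kD; first by rewrite big_ord0.
rewrite big_ord_recr /= mulnDr IH; last exact: ltnW.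
have [t ->] : exists t, D = (k.+1 + t)%N by exists (D - k.+1)%N; lia.
nia.
Qed.

Lemma card_pm_index (k d : nat) :
  (k <= d)%N -> (2 * #|pm_index k d|)%N = (k * (2 * d - k + 3))%N.
Proof.
move=> kd; have -> : #|pm_index k d| = (\sum_(a < k) (d.+1 - a))%N.
  rewrite -sum1_card big_mkcond /=.
  under [RHS]eq_bigr do rewrite -sum_leq_ord.
  by rewrite pair_bigA /=; apply: eq_bigr => -[a b] _; rewrite inE /=; case: leqP.
rewrite double_sum_subn; last exact: leqW.
have [t ->] : exists t, d = (k + t)%N by exists (d - k)%N; lia.
nia.
Qed.

Theorem proposition4 (n k d beta M : nat) :
  (1 <= k)%N -> (k <= d)%N -> (d <= n - 1)%N ->
  (0 < beta)%N ->
  (2 * M = k * (2 * d - k + 3) * beta)%N ->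
  exists q0 : nat, forall F : finFieldType, (q0 <= #|F|)%N ->
    exists (S0 : 'I_n -> 'M[F]_(d.+1 * beta, M))
           (R : 'M[F]_(k * beta, M))
           (strat : repair_strategy F n (d.+1 * beta) (k * beta) beta),
      forall evs : seq (dss_event n),
        (forall e, e \in evs -> valid_event d e) ->
        reconstructible k (run strat R S0 evs).
Proof.
move=> _ k_le_d _ _ size_M.
(* any n distinct evaluation points will do *)
exists n => F card_F.
pose xi (i : 'I_n) : F := enum_val (widen_ord card_F i).
have xi_inj : injective xi.
  by move=> i j /enum_val_inj/(congr1 val) ij; apply: val_inj.
have M_eq : M = (pm_dim k d * beta)%N.
  by apply/eqP; rewrite -(eqn_pmul2l (isT : (0 < 2)%N)) mulnA /pm_dim card_pm_index // size_M.
subst M.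
pose S i := replicate_mx beta (pm_node k d xi i).
pose R := replicate_mx beta (pm_repair_node F k_le_d).
have [strat run_eq] := exact_repair_strategy (S := S) (R := R)
  (fun e e_valid => exact_repairable_replicate beta (pm_repairable xi_inj k_le_d e_valid.2)).
exists S, R, strat => evs evs_valid.
apply: eq_reconstructible (run_eq evs evs_valid) _.
exact/reconstructible_replicate/pm_reconstructible.
Qed.
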